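(* Let $a(x)=\sum_i a_ix^i$ and $b(x)=\sum_ib_ix^i$ in $\mathbb{F}_2[x]/\langle x^n-1\rangle$ define a generalized bicycle code. Its Tanner graph has girth $4$ if and only if there exist indices $i,j,j'\in\{0,1,\dots,n-1\}$ with $j\ne j'$ such that at least one of the following holds (indices modulo $n$): (i) $i\neq 0$, $a_j=a_{j+i}=1$ and $a_{j'}=a_{j'+i}=1$; (ii) $i\neq 0$, $b_j=b_{j+i}=1$ and $b_{j'}=b_{j'+i}=1$; (iii) $a_j=b_{j+i}=1$ and $a_{j'}=b_{j'+i}=1$.
   Context: The Tanner graph of the GB code defined by $a,b$ is the bipartite graph with $n$ check nodes $x_0,\dots,x_{n-1}$ (rows of the X-check matrix $H_X=[G_{a(x)}\mid G_{b(x)}]$) and $2n$ qubit nodes $q_0,\dots,q_{n-1},q'_0,\dots,q'_{n-1}$, where $x_t$ is adjacent to $q_c$ iff $a_{t-c}=1$ and to $q'_c$ iff $b_{t-c}=1$ (indices mod $n$; $G_{a(x)}$ is the circulant matrix with $(t,c)$ entry $a_{t-c}$). The girth is the length of a shortest cycle. *)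

From mathcomp Require Import all_boot.
Set Implicit Arguments. Unset Strict Implicit. Unset Printing Implicit Defensive.

(* Coefficients a_k, b_k (k < n) of a(x), b(x) in F_2[x]/<x^n-1> are given as
   boolean functions on nat; only indices < n are ever used (all reduced mod n). *)

(* Vertices of the Tanner graph: check nodes x_t (inl t), qubit nodes q_c
   (inr (inl c)) and q'_c (inr (inr c)). *)
Definition tanner_vertex (n : nat) : finType := ('I_n + ('I_n + 'I_n))%type.

Definition submod (n t c : nat) : nat := (t + n - c) %% n.

Definition tanner_adj (n : nat) (a b : nat -> bool) : rel (tanner_vertex n) :=
  fun u v =>
    match u, v with
    | inl t, inr (inl c) => a (submod n t c)
    | inl t, inr (inr c) => b (submod n t c)
    | inr (inl c), inl t => a (submod n t c)
    | inr (inr c), inl t => b (submod n t c)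
    | _, _ => false
    end.

Definition is_cycle (V : finType) (e : rel V) (m : nat) (f : 'I_m -> V) : Prop :=
  3 <= m /\ injective f /\ (forall i : 'I_m, e (f i) (f (ordS i))).

Definition has_girth (V : finType) (e : rel V) (k : nat) : Prop :=
  (exists f : 'I_k -> V, is_cycle e f) /\
  (forall (m : nat) (f : 'I_m -> V), is_cycle e f -> k <= m).
Arguments tanner_adj n a b : clear implicits.

(* A cycle of the Tanner graph alternates between checks and qubits, so it has
   even length, and the girth is 4 exactly when some 4-cycle exists, i.e. when
   two distinct checks x_t, x_t' have two distinct common qubit neighbours.
   For neighbours q_c, q_c' the four edges say a_{t-c} = a_{t'-c} = a_{t-c'} =
   a_{t'-c'} = 1, which is condition (i) for j = t - c, j' = t - c', i = t' - t;
   likewise two neighbours q'_c, q'_c' give (ii), and q_c, q'_c' give (iii) for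
   j = t - c, j' = t' - c, i = c - c'. Reading these substitutions backwards
   turns each condition into a 4-cycle. *)

From mathcomp Require Import all_boot zify.
Set Implicit Arguments. Unset Strict Implicit. Unset Printing Implicit Defensive.

Lemma ordS_inord m k : k <= m -> ordS (inord k : 'I_m.+1) = inord (k.+1 %% m.+1).
Proof. by move=> km; apply: val_inj; rewrite /= !inordK // ltn_pmod. Qed.

Section Cycles.

Variables (V : finType) (e : rel V).

Lemma bipartite_cycle_even (side : V -> bool) m (f : 'I_m -> V) :
  (forall u v, e u v -> side u != side v) -> is_cycle e f -> ~~ odd m.
Proof.
move=> e_side; case: m f => [|m] f [_ [_ f_adj]] //.
have inord0 : inord 0 = ord0 :> 'I_m.+1 by apply: val_inj; rewrite /= inordK.
have side_f k : k <= m -> side (f (inord k)) = side (f ord0) (+) odd k.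
  elim: k => [|k IH] km; first by rewrite inord0 addbF.
  have := e_side _ _ (f_adj (inord k)).
  rewrite ordS_inord 1?ltnW // modn_small // IH 1?ltnW //= addbN.
  by case: (side (f ord0) (+) _); case: (side _).
have := e_side _ _ (f_adj (inord m)).
rewrite ordS_inord // modnn side_f // inord0 /=.
by case: (side (f ord0)); case: (odd m).
Qed.

Lemma four_cycleP : irreflexive e ->
  (exists f : 'I_4 -> V, is_cycle e f) <->
  exists x0 x1 x2 x3,
    [/\ x0 != x2, x1 != x3 & [&& e x0 x1, e x1 x2, e x2 x3 & e x3 x0]].
Proof.
move=> e_irr; split.
  move=> [f [_ [f_inj f_adj]]].
  have adj k : k < 4 -> e (f (inord k)) (f (inord (k.+1 %% 4))).
    by move=> k4; rewrite -ordS_inord.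
  have neq k l : k < 4 -> l < 4 -> k != l -> f (inord k) != f (inord l).
    move=> k4 l4; apply: contra => /eqP/f_inj/(congr1 val).
    by rewrite /= !inordK // => ->.
  exists (f (inord 0)), (f (inord 1)), (f (inord 2)), (f (inord 3)).
  by split; rewrite ?neq //; apply/and4P; split; apply: adj.
move=> [x0 [x1 [x2 [x3 [x02 x13 /and4P[e01 e12 e23 e30]]]]]].
have neq_adj u v : e u v || e v u -> u != v.
  by apply: contraTneq => ->; rewrite e_irr.
have xs_uniq : uniq [:: x0; x1; x2; x3].
  by rewrite /= !inE !negb_or x02 x13 !neq_adj ?e01 ?e12 ?e23 ?e30 ?orbT.
exists (fun k : 'I_4 => nth x0 [:: x0; x1; x2; x3] k); split=> //; split.
  by move=> i j /eqP; rewrite nth_uniq // => /eqP/val_inj.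
by case=> [[|[|[|[|]]]]].
Qed.

End Cycles.

Lemma submod_cases n x y : x < n -> y < n ->
  submod n x y < n /\
  (y <= x /\ submod n x y + y = x \/ x < y /\ submod n x y + y = x + n).
Proof.
move=> x_n y_n; rewrite /submod; split; first by rewrite ltn_pmod //; lia.
case: (leqP y x) => yx; [left | right]; split=> //.
  by rewrite -addnBAC // modnDr modn_small; lia.
by rewrite modn_small; lia.
Qed.

Lemma addmod_cases n x y : x < n -> y < n ->
  (x + y) %% n < n /\
  (x + y < n /\ (x + y) %% n = x + y \/ n <= x + y /\ (x + y) %% n + n = x + y).
Proof.
move=> x_n y_n; split; first by rewrite ltn_pmod //; lia.
case: (ltnP (x + y) n) => xy; [left | right]; split=> //; first exact: modn_small.
by rewrite -(subnK xy) modnDr modn_small; lia.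
Qed.

(* Replaces each innermost [submod n x y] or [(x + y) %% n] by a fresh
   variable constrained by the two possible linear equations, then calls [lia]. *)
Ltac mod_lia n :=
  let innermost x :=
    match x with
    | context [submod _ _ _] => fail 1
    | context [_ %% _] => fail 1
    | _ => idtac
    end in
  repeat match goal with
  | |- context [submod n ?x ?y] => innermost x; innermost y;
      have := @submod_cases n x y ltac:(lia) ltac:(lia);
      move: (submod n x y) => ?; case=> [? [[? ?] | [? ?]]]
  | |- context [(?x + ?y) %% n] => innermost x; innermost y;
      have := @addmod_cases n x y ltac:(lia) ltac:(lia);
      move: ((x + y) %% n) => ?; case=> [? [[? ?] | [? ?]]]
  end; lia.

Section SubMod.

Variable n : nat.

Lemma ltn_submod x y : 0 < n -> submod n x y < n.
Proof. exact: ltn_pmod. Qed.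

Lemma submodn0 x : x < n -> submod n x 0 = x.
Proof. move=> *; mod_lia n. Qed.

Lemma submodK x y : x < n -> y < n -> submod n x (submod n x y) = y.
Proof. move=> *; mod_lia n. Qed.

Lemma submodN x i : x < n -> i < n -> submod n x (submod n 0 i) = (x + i) %% n.
Proof. move=> *; mod_lia n. Qed.

Lemma submod_add x y z : x < n -> y < n -> z < n ->
  (submod n x y + submod n z x) %% n = submod n z y.
Proof. move=> *; mod_lia n. Qed.

Lemma submod_eq0 x y : x < n -> y < n -> (submod n x y == 0) = (x == y).
Proof. by move=> *; apply/eqP/eqP; mod_lia n. Qed.

Lemma eq_submod2l x y y' : x < n -> y < n -> y' < n ->
  (submod n x y == submod n x y') = (y == y').
Proof. by move=> *; apply/eqP/eqP; mod_lia n. Qed.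

Lemma eq_submod2r x x' y : x < n -> x' < n -> y < n ->
  (submod n x y == submod n x' y) = (x == x').
Proof. by move=> *; apply/eqP/eqP; mod_lia n. Qed.

End SubMod.

Definition four_cycle_condition (n : nat) (a b : nat -> bool) : Prop :=
  exists i j j' : nat,
    [/\ i < n, j < n, j' < n & j != j'] /\
    [\/ [/\ i != 0, a j, a ((j + i) %% n), a j' & a ((j' + i) %% n)],
        [/\ i != 0, b j, b ((j + i) %% n), b j' & b ((j' + i) %% n)]
      | [/\ a j, b ((j + i) %% n), a j' & b ((j' + i) %% n)]].

Section TannerGraph.

Variables (n : nat) (a b : nat -> bool).

Local Notation adj := (tanner_adj n a b).

Definition is_check (v : tanner_vertex n) : bool := if v is inl _ then true else false.

Definition checks_share_two_qubits : Prop :=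
  exists (t t' : 'I_n) (u w : 'I_n + 'I_n),
    [/\ t != t', u != w &
        [&& adj (inl t) (inr u), adj (inl t') (inr u),
            adj (inl t) (inr w) & adj (inl t') (inr w)]].

Lemma tanner_adj_sym : symmetric adj.
Proof. by case=> [?|[?|?]] [?|[?|?]]. Qed.

Lemma tanner_adj_irr : irreflexive adj.
Proof. by case=> [?|[?|?]]. Qed.

Lemma tanner_adj_check u v : adj u v -> is_check u != is_check v.
Proof. by case: u v => [?|[?|?]] [?|[?|?]]. Qed.

Lemma tanner_cycle_ge4 m (f : 'I_m -> tanner_vertex n) : is_cycle adj f -> 4 <= m.
Proof.
move=> f_cycle; have m_even := bipartite_cycle_even tanner_adj_check f_cycle.
by case: f_cycle m_even => m3 _; case: m f m3 => [|[|[|[|m]]]].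
Qed.

Lemma tanner_four_cycleP :
  (exists f : 'I_4 -> tanner_vertex n, is_cycle adj f) <-> checks_share_two_qubits.
Proof.
rewrite four_cycleP; last exact: tanner_adj_irr.
split.
  move=> [[t|u] [[t1|u1] [[t2|u2] [[t3|u3] [x02 x13 /and4P[e01 e12 e23 e30]]]]]];
    try by move: (tanner_adj_check e01) (tanner_adj_check e12) (tanner_adj_check e23).
  - exists t, t2, u1, u3; split=> //.
    by apply/and4P; split; by [|rewrite tanner_adj_sym].
  - exists t1, t3, u, u2; split=> //.
    by apply/and4P; split; by [|rewrite tanner_adj_sym].
move=> [t [t' [u [w [tt' uw /and4P[htu ht'u htw ht'w]]]]]].
exists (inl t), (inr u), (inl t'), (inr w); split.
- by apply: contra tt' => /eqP[->].
- by apply: contra uw => /eqP[->].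
- by apply/and4P; split; by [|rewrite tanner_adj_sym].
Qed.

Lemma checks_share_two_qubitsP :
  0 < n -> checks_share_two_qubits <-> four_cycle_condition n a b.
Proof.
move=> n_gt0; split.
  move=> [t [t' [u [w [tt' uw /and4P[htu ht'u htw ht'w]]]]]].
  have [t_n t'_n] := (ltn_ord t, ltn_ord t').
  case: u w uw htu ht'u htw ht'w => c [] c' /= cc' htc ht'c htc' ht'c';
    have [c_n c'_n] := (ltn_ord c, ltn_ord c').
  - exists (submod n t' t), (submod n t c), (submod n t c').
    split; first by rewrite !ltn_submod // eq_submod2l.
    by constructor 1; rewrite submod_eq0 1?eq_sym // !submod_add.
  - exists (submod n c c'), (submod n t c), (submod n t' c).
    split; first by rewrite !ltn_submod // eq_submod2r.
    by constructor 3; rewrite !(addnC _ (submod n c c')) !submod_add.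
  - exists (submod n c' c), (submod n t c'), (submod n t' c').
    split; first by rewrite !ltn_submod // eq_submod2r.
    by constructor 3; rewrite !(addnC _ (submod n c' c)) !submod_add.
  - exists (submod n t' t), (submod n t c), (submod n t c').
    split; first by rewrite !ltn_submod // eq_submod2l.
    by constructor 2; rewrite submod_eq0 1?eq_sym // !submod_add.
move=> [i [j [j' [[i_n j_n j'_n jj'] cond]]]].
have opp_n k : submod n 0 k < n by exact: ltn_submod.
case: cond => [[i0 hj hji hj' hj'i] | [i0 hj hji hj' hj'i] | [hj hji hj' hj'i]].
- exists (Ordinal n_gt0), (Ordinal i_n).
  exists (inl (Ordinal (opp_n j))), (inl (Ordinal (opp_n j'))).
  split; first by rewrite -val_eqE /= eq_sym.
    by apply: contra jj' => /eqP[] /eqP; rewrite eq_submod2l.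
  by rewrite /= !submodK // !submodN // (addnC i j) (addnC i j') hj hji hj' hj'i.
- exists (Ordinal n_gt0), (Ordinal i_n).
  exists (inr (Ordinal (opp_n j))), (inr (Ordinal (opp_n j'))).
  split; first by rewrite -val_eqE /= eq_sym.
    by apply: contra jj' => /eqP[] /eqP; rewrite eq_submod2l.
  by rewrite /= !submodK // !submodN // (addnC i j) (addnC i j') hj hji hj' hj'i.
- exists (Ordinal j_n), (Ordinal j'_n), (inl (Ordinal n_gt0)), (inr (Ordinal (opp_n i))).
  by split=> //=; rewrite !submodn0 // !submodN // hj hji hj' hj'i.
Qed.

End TannerGraph.

Theorem theorem10 (n : nat) (hn : 0 < n) (a b : nat -> bool) :
  has_girth (tanner_adj n a b) 4 <->
  exists i j j' : nat,
    [/\ i < n, j < n, j' < n & j != j'] /\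
    [\/ [/\ i != 0, a j, a ((j + i) %% n), a j' & a ((j' + i) %% n)],
        [/\ i != 0, b j, b ((j + i) %% n), b j' & b ((j' + i) %% n)]
      | [/\ a j, b ((j + i) %% n), a j' & b ((j' + i) %% n)]].
Proof.
split.
  by move=> [four_cycle _]; apply/(checks_share_two_qubitsP a b hn)/tanner_four_cycleP.
move=> cond; split; last exact: tanner_cycle_ge4.
by apply/tanner_four_cycleP/(checks_share_two_qubitsP a b hn).
Qed.
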